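(* Consider the contextual bandit setting below run for $T$ iterations with $N$ arms and $d$-dimensional contexts. Let $E_T$ be the event that the policy population reaches the $\delta$-target within $T$ iterations, with $\Pr(E_T)=1-\epsilon_{\delta,T}$. Suppose there is a contextual bandit algorithm and a constant $C>0$ such that for every $\eta_1\in(0,1)$, with probability at least $1-\eta_1$ its $T$-regret satisfies $R_T\le C\sqrt{Td\,\ln^3\!\big(NT\ln(T)/\eta_1\big)}$, and that this event is independent of $E_T$. Then for every $\eta$ with $\epsilon_{\delta,T}<\eta<1$, with probability at least $1-\eta$ the $\delta$-target is reached within $T$ iterations and $$R_T\le C\sqrt{Td\,\ln^3\!\Big(\frac{NT\ln(T)\,(1-\epsilon_{\delta,T})}{\eta-\epsilon_{\delta,T}}\Big)},$$ i.e. the regret of bandit selection is $O\Big(\sqrt{Td\ln^3\big(\frac{NT\ln(T)(1-\epsilon_{\delta,T})}{\eta-\epsilon_{\delta,T}}\big)}\Big)$ with probability $1-\eta$.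
   Context: Contextual bandit setting: there is a set $\mathcal{A}$ of $N$ arms (here, the $N$ policies of a diversity RL population; selecting an arm means choosing that policy to update). At each iteration $t=1,\dots,T$ one observes feature vectors $x_{t,a}\in\mathbb{R}^d$ with $\|x_{t,a}\|_2\le 1$ for each $a\in\mathcal{A}$, the algorithm chooses an arm $a_t$ and receives reward $r_{t,a_t}\in[0,1]$ (the change in population diversity caused by the update). Linear realizability: there is an unknown $\theta^*\in\mathbb{R}^d$ with $\|\theta^*\|_2\le1$ such that $\mathbb{E}[r_{t,a}\mid x_{t,a}]=x_{t,a}^T\theta^*$ for all $t,a$. The $T$-regret is $R_T=\mathbb{E}[\sum_{t=1}^T r_{t,a_t^*}]-\mathbb{E}[\sum_{t=1}^T r_{t,a_t}]$, where $a_t^*$ is the arm with maximal expected reward at iteration $t$. For a diversity matrix $U$ with $U_{ij}=Div(\pi^i,\pi^j)$ and a population-diversity function $f$, the population reaches the $\delta$-target when $f(U)>\delta$. The number $\epsilon_{\delta,T}$ satisfies $\epsilon_{\delta,T}\to0$ as $T\to\infty$, so $\eta-\epsilon_{\delta,T}\to\eta>0$. *)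

From HB Require Import structures.
From mathcomp Require Import all_boot all_order all_algebra.
From mathcomp Require Import all_classical all_reals all_analysis.
Set Implicit Arguments. Unset Strict Implicit. Unset Printing Implicit Defensive.
Import Order.TTheory GRing.Theory Num.Theory.
Local Open Scope ring_scope.
Local Open Scope classical_set_scope.

Definition lin_reward (R : realType) (d : nat) (x theta : 'rV[R]_d) : R :=
  (x *m theta^T) 0 0.

Definition l2norm (R : realType) (d : nat) (x : 'rV[R]_d) : R :=
  Num.sqrt (\sum_(i < d) x 0 i ^+ 2).

(* T-regret of the arm selection a (iterations 1..T), with a_star t the arm
   of maximal expected reward at iteration t. *)
Definition bandit_regret (R : realType) (Omega : Type) (N d T : nat)
  (x : nat -> Omega -> 'I_N -> 'rV[R]_d) (theta : 'rV[R]_d)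
  (a a_star : nat -> Omega -> 'I_N) (w : Omega) : R :=
  \sum_(1 <= t < T.+1)
     (lin_reward (x t w (a_star t w)) theta - lin_reward (x t w (a t w)) theta).

Definition reaches_target (R : realType) (Omega : Type) (N T : nat)
  (U : nat -> Omega -> 'M[R]_N) (f : 'M[R]_N -> R) (delta : R) : set Omega :=
  [set w | exists t : nat, (t <= T)%N /\ delta < f (U t w)].

Definition regret_bound (R : realType) (C : R) (N d T : nat) (eta1 : R) : R :=
  C * Num.sqrt (T%:R * d%:R * (ln (N%:R * T%:R * ln T%:R / eta1)) ^+ 3).

(* Split the confidence budget [eta] between the target event E_T, which fails
   with probability [eps], and the regret event: running the regret bound at
   level [eta1 = (eta - eps) / (1 - eps)] makes the independent intersection
   have probability at least [(1 - eps) (1 - eta1) = 1 - eta], and the regret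
   bound at level [eta1] is exactly the one in the conclusion. *)
From HB Require Import structures.
From mathcomp Require Import all_boot all_order all_algebra.
From mathcomp Require Import all_classical all_reals all_analysis.
From mathcomp Require Import ring lra.
Set Implicit Arguments. Unset Strict Implicit. Unset Printing Implicit Defensive.
Import Order.TTheory GRing.Theory Num.Theory.
Local Open Scope ring_scope.
Local Open Scope classical_set_scope.

Lemma measureI_indep_ge (R : realType) (dm : measure_display) (T : measurableType dm)
  (mu : {measure set T -> \bar R}) (A B : set T) (p q : R) :
  0 <= p -> mu A = p%:E -> (q%:E <= mu B)%E ->
  mu (A `&` B) = (mu A * mu B)%E -> ((p * q)%:E <= mu (A `&` B))%E.
Proof.
move=> p_ge0 muA muB indepAB.
by rewrite indepAB muA EFinM lee_wpmul2l // lee_fin.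
Qed.

Section ResidualConfidence.
Variable R : realFieldType.
Variables eps eta : R.
Hypothesis lt_eps_eta : eps < eta.
Hypothesis lt_eta1 : eta < 1.

Definition residual_confidence : R := (eta - eps) / (1 - eps).

Let compl_eps_gt0 : 0 < 1 - eps.
Proof. by rewrite subr_gt0 (lt_trans lt_eps_eta lt_eta1). Qed.

Let gap_gt0 : 0 < eta - eps.
Proof. by rewrite subr_gt0. Qed.

Lemma residual_confidence_in01 : 0 < residual_confidence < 1.
Proof.
rewrite divr_gt0 //= ltr_pdivrMr // mul1r.
by rewrite ltrD2r.
Qed.

Lemma mul_compl_residual_confidence :
  (1 - eps) * (1 - residual_confidence) = 1 - eta.
Proof. by rewrite /residual_confidence; field; rewrite lt0r_neq0. Qed.

Lemma div_residual_confidence (c : R) :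
  c / residual_confidence = c * (1 - eps) / (eta - eps).
Proof.
by rewrite /residual_confidence; field; rewrite !lt0r_neq0.
Qed.

End ResidualConfidence.

Theorem theorem7 (R : realType) (dm : measure_display) (Omega : measurableType dm)
  (P : probability Omega R) (N d T : nat)
  (x : nat -> Omega -> 'I_N -> 'rV[R]_d) (theta : 'rV[R]_d)
  (a a_star : nat -> Omega -> 'I_N)
  (U : nat -> Omega -> 'M[R]_N) (f : 'M[R]_N -> R) (delta C eps : R) :
  (forall t w i, l2norm (x t w i) <= 1) ->
  l2norm theta <= 1 ->
  (forall t w i, lin_reward (x t w i) theta <= lin_reward (x t w (a_star t w)) theta) ->
  measurable (reaches_target T U f delta) ->
  P (reaches_target T U f delta) = (1 - eps)%:E ->
  0 < C ->
  (forall eta1, 0 < eta1 < 1 ->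
     let G := [set w | bandit_regret T x theta a a_star w <= regret_bound C N d T eta1] in
     [/\ measurable G,
         (P G >= (1 - eta1)%:E)%E
       & P (reaches_target T U f delta `&` G) =
           (P (reaches_target T U f delta) * P G)%E]) ->
  forall eta, eps < eta < 1 ->
    (P (reaches_target T U f delta `&`
        [set w | (bandit_regret T x theta a a_star w <=
                 C * Num.sqrt (T%:R * d%:R *
                   (ln (N%:R * T%:R * ln T%:R * (1 - eps) / (eta - eps))) ^+ 3))%R])
     >= (1 - eta)%:E)%E.
Proof.
move=> _ _ _ _ PE _ regret_hp eta /andP[lt_eps_eta lt_eta1].
have eta1_in01 := residual_confidence_in01 lt_eps_eta lt_eta1.
have [_ PG indepEG] := regret_hp _ eta1_in01.
rewrite -div_residual_confidence // -(mul_compl_residual_confidence lt_eps_eta lt_eta1).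
apply: measureI_indep_ge PE PG indepEG.
by rewrite subr_ge0 ltW // (lt_trans lt_eps_eta lt_eta1).
Qed.
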